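(* Let $V\subseteq\mathcal V$ be finite and $\mathcal E,\mathcal F\in\mathit{DProg}(V)$. Then (1) $\{\mathcal E\}\le_T^s\{\mathcal F\}$ iff $\mathcal E\le_T^e\mathcal F$; (2) $\{\mathcal E\}\le_P^s\{\mathcal F\}$ iff $\mathcal E\le_P^e\mathcal F$.
   Context: $\mathcal V$ is a countably infinite set of qubit variables; $\mathcal H_V=\bigotimes_{q\in V}\mathcal H_q$ for finite $V$. $\mathcal D(\mathcal H)$: partial density operators; $\mathcal P(\mathcal H)$: effects (positive operators with eigenvalues in $[0,1]$). $\mathit{DProg}(V)$: completely positive trace-nonincreasing super-operators on $\mathcal L(\mathcal H_V)$. Operators/super-operators on subsystems are implicitly extended by tensoring with identities. Effect-based: for finite $W$ and $M,N\in\mathcal P(\mathcal H_W)$, $\mathcal E\models_{tot}(M,N)$ iff for all finite $X\supseteq V\cup W$ and $\rho\in\mathcal D(\mathcal H_X)$, ${\rm tr}(M\rho)\le{\rm tr}(N\mathcal E(\rho))$; $\mathcal E\models_{par}(M,N)$ iff moreover-with-slack ${\rm tr}(M\rho)\le{\rm tr}(N\mathcal E(\rho))+{\rm tr}(\rho)-{\rm tr}(\mathcal E(\rho))$ for all such $X,\rho$. $\mathcal E\le_T^e\mathcal F$ (resp. $\le_P^e$) iff every $(M,N)$ (over all finite $W$) satisfied by $\mathcal E$ in the total (resp. partial) sense is satisfied by $\mathcal F$. Set-of-effects based: for a set of super-operators $\mathbb E$ and $\Theta,\Psi\subseteq\mathcal P(\mathcal H_W)$, let $\mathrm{Exp}_{dem}(\rho\models\Theta)=\inf_{M\in\Theta}{\rm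 tr}(M\rho)$ (equal to ${\rm tr}(\rho)$ if $\Theta=\emptyset$). $\mathbb E\models_{tot}(\Theta,\Psi)$ iff for all finite $X\supseteq V\cup W$ and $\rho\in\mathcal D(\mathcal H_X)$, $\mathrm{Exp}_{dem}(\rho\models\Theta)\le\inf_{\mathcal E\in\mathbb E}\mathrm{Exp}_{dem}(\mathcal E(\rho)\models\Psi)$; $\mathbb E\models_{par}(\Theta,\Psi)$ iff for all such $X,\rho$, $\mathrm{Exp}_{dem}(\rho\models\Theta)\le\inf_{\mathcal E\in\mathbb E}[\mathrm{Exp}_{dem}(\mathcal E(\rho)\models\Psi)+{\rm tr}(\rho)-{\rm tr}(\mathcal E(\rho))]$. $\mathbb E\le_T^s\mathbb F$ (resp. $\le_P^s$) iff for every finite $W$ and all $\Theta,\Psi\subseteq\mathcal P(\mathcal H_W)$, $\mathbb E\models_{tot}(\Theta,\Psi)$ implies $\mathbb F\models_{tot}(\Theta,\Psi)$ (resp. with $\models_{par}$). *)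

From HB Require Import structures.
From mathcomp Require Import all_boot all_order all_algebra.
From mathcomp Require Import boolp classical_sets reals.
From mathcomp Require Import complex.

Set Implicit Arguments.
Unset Strict Implicit.
Unset Printing Implicit Defensive.

Import Order.TTheory GRing.Theory Num.Theory.
Local Open Scope ring_scope.
Local Open Scope classical_set_scope.

(* Qubit variables: the countably infinite set  nat.  A finite set of *)
(* variables is represented by a list (duplicates are irrelevant).    *)
Definition qvar := nat.
Definition vset := seq qvar.

(* computational basis of H_X : assignments  X -> bool                *)
Definition bas (X : vset) := {ffun seq_sub X -> bool}.

(* a basis state of H_X seen as a global assignment (false outside X) *)
Definition glob (X : vset) (b : bas X) : nat -> bool :=
  fun n => [exists x : seq_sub X, (val x == n) && b x].
Definition loc (X : vset) (f : nat -> bool) : bas X := [ffun x => f (val x)].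
Definition res (X Y : vset) (b : bas X) : bas Y := loc Y (glob b).
Definition vdiff (X V : vset) : vset := [seq x <- X | x \notin V].
(* for V ⊆ X: the basis state of H_X = H_V ⊗ H_{X\V} built from v and r *)
Definition comb (V X : vset) (v : bas V) (r : bas (vdiff X V)) : bas X :=
  loc X (fun n => if n \in V then glob v n else glob r n).

Section Quantum.
Variable R : realType.
Local Notation C := (R[i]).

Definition opT (I : finType) := I -> I -> C.
Definition op (X : vset) := opT (bas X).

Definition tr (I : finType) (A : opT I) : C := \sum_(i : I) A i i.
Definition mulop (I : finType) (A B : opT I) : opT I :=
  fun i j => \sum_(k : I) A i k * B k j.
Definition idop (I : finType) : opT I := fun i j => (i == j)%:R.
Definition qform (I : finType) (A : opT I) (v : I -> C) : C :=
  \sum_(i : I) \sum_(j : I) conjc (v i) * A i j * v j.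
(* positive (semidefinite) operator; 0 <= z in C means z real and >= 0 *)
Definition psd (I : finType) (A : opT I) : Prop := forall v, 0 <= qform A v.
Definition loew (I : finType) (A B : opT I) : Prop :=
  psd (fun i j => B i j - A i j).

Definition effect (W : vset) (M : op W) : Prop := psd M /\ loew M (@idop _).
Definition pdensity (X : vset) (rho : op X) : Prop := psd rho /\ tr rho <= 1.

Definition sop (V : vset) := op V -> op V.

Definition sop_linear (V : vset) (E : sop V) : Prop :=
  forall (a : C) (A B : op V) i j,
    E (fun k l => a * A k l + B k l) i j = a * E A i j + E B i j.

(* id_T ⊗ E acting on L(C^T ⊗ H_V) *)
Definition ampl (V : vset) (E : sop V) (T : finType) :
    opT (T * bas V)%type -> opT (T * bas V)%type :=
  fun rho p q => E (fun u u' => rho (p.1, u) (q.1, u')) p.2 q.2.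

Definition sop_CP (V : vset) (E : sop V) : Prop :=
  forall (T : finType) (rho : opT (T * bas V)%type), psd rho -> psd (ampl E rho).

Definition sop_TNI (V : vset) (E : sop V) : Prop :=
  forall rho : op V, psd rho -> tr (E rho) <= tr rho.

Definition DProg (V : vset) (E : sop V) : Prop :=
  [/\ sop_linear E, sop_CP E & sop_TNI E].

(* implicit extensions by tensoring with identities (V ⊆ X) *)
Definition extS (V X : vset) (E : sop V) : sop X :=
  fun rho b b' =>
    E (fun v v' => rho (comb v (res (vdiff X V) b))
                       (comb v' (res (vdiff X V) b')))
      (res V b) (res V b').

Definition extO (W X : vset) (M : op W) : op X :=
  fun b b' => M (res W b) (res W b') *
              (res (vdiff X W) b == res (vdiff X W) b')%:R.

Definition expv (W X : vset) (M : op W) (rho : op X) : R :=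
  complex.Re (tr (mulop (@extO W X M) rho)).

Definition sat_tot_e (V W : vset) (E : sop V) (M N : op W) : Prop :=
  forall X : vset, {subset V ++ W <= X} ->
  forall rho : op X, pdensity rho ->
    expv M rho <= expv N (@extS V X E rho).

Definition sat_par_e (V W : vset) (E : sop V) (M N : op W) : Prop :=
  forall X : vset, {subset V ++ W <= X} ->
  forall rho : op X, pdensity rho ->
    expv M rho <= expv N (@extS V X E rho)
                  + complex.Re (tr rho) - complex.Re (tr (@extS V X E rho)).

Definition le_T_e (V : vset) (E F : sop V) : Prop :=
  forall (W : vset) (M N : op W), effect M -> effect N ->
    sat_tot_e E M N -> sat_tot_e F M N.

Definition le_P_e (V : vset) (E F : sop V) : Prop :=
  forall (W : vset) (M N : op W), effect M -> effect N ->
    sat_par_e E M N -> sat_par_e F M N.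

Definition expdem (W X : vset) (rho : op X) (Theta : set (op W)) : R :=
  if pselect (Theta = set0) then complex.Re (tr rho)
  else inf [set expv M rho | M in Theta].

(* a <= inf_{E in EE} f(E) is expressed as: a <= f(E) for all E in EE
   (this is exactly the meaning of the infimum, including EE = ∅) *)
Definition sat_tot_s (V W : vset) (EE : set (sop V)) (Theta Psi : set (op W))
  : Prop :=
  forall X : vset, {subset V ++ W <= X} ->
  forall rho : op X, pdensity rho ->
  forall E, EE E -> expdem rho Theta <= expdem (@extS V X E rho) Psi.

Definition sat_par_s (V W : vset) (EE : set (sop V)) (Theta Psi : set (op W))
  : Prop :=
  forall X : vset, {subset V ++ W <= X} ->
  forall rho : op X, pdensity rho ->
  forall E, EE E ->
    expdem rho Theta <= expdem (@extS V X E rho) Psi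
                        + complex.Re (tr rho) - complex.Re (tr (@extS V X E rho)).

Definition le_T_s (V : vset) (EE FF : set (sop V)) : Prop :=
  forall (W : vset) (Theta Psi : set (op W)),
    Theta `<=` @effect W -> Psi `<=` @effect W ->
    sat_tot_s EE Theta Psi -> sat_tot_s FF Theta Psi.

Definition le_P_s (V : vset) (EE FF : set (sop V)) : Prop :=
  forall (W : vset) (Theta Psi : set (op W)),
    Theta `<=` @effect W -> Psi `<=` @effect W ->
    sat_par_s EE Theta Psi -> sat_par_s FF Theta Psi.

End Quantum.

From HB Require Import structures.
From mathcomp Require Import all_boot all_order all_algebra.
From mathcomp Require Import boolp classical_sets reals.
From mathcomp Require Import complex.
From mathcomp Require Import sesquilinear spectral.
From mathcomp Require Import ring lra.

Set Implicit Arguments.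
Unset Strict Implicit.
Unset Printing Implicit Defensive.
Import Order.TTheory GRing.Theory Num.Theory.
Local Open Scope ring_scope.
Local Open Scope classical_set_scope.

(* Sets of effects add nothing because [le_T_e] and [le_P_e] already compare
   expectations pointwise.  Extend an effect [N] on [W] to [U = V ++ W] and let
   [E^*] be the Heisenberg dual of [E] on [U], so that
   [tr (E^*(K) rho) = tr (K E(rho))].  Then [E] satisfies [(E^*(N), N)] totally
   and [(I - E^*(I - N), N)] partially, both with equality, and these are
   effects because [E] is completely positive and trace non-increasing (via
   [tr (A B) >= 0] for positive [A], [B], a consequence of the spectral
   theorem).  Feeding them to [F] gives [tr (N E(rho)) <= tr (N F(rho))],
   resp. [tr (N E(rho)) - tr E(rho) <= tr (N F(rho)) - tr F(rho)], and such
   pointwise inequalities pass to infima over any set of effects.  The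
   converse implications are the case of singletons. *)

Lemma cat_subset (V W X : vset) :
  {subset V ++ W <= X} -> {subset V <= X} /\ {subset W <= X}.
Proof. by move=> VWX; split => n n_in; apply: VWX; rewrite mem_cat n_in ?orbT. Qed.

Lemma subset_cat2 (V W : vset) : {subset V <= V ++ W} /\ {subset W <= V ++ W}.
Proof. exact: cat_subset. Qed.

Lemma cat_subset_catA (V W X : vset) :
  {subset V ++ W <= X} -> {subset V ++ (V ++ W) <= X}.
Proof. by move=> VWX n; rewrite !mem_cat orbA orbb -mem_cat => /VWX. Qed.

Lemma glob_val (X : vset) (b : bas X) (x : seq_sub X) : glob b (val x) = b x.
Proof.
apply/existsP/idP => [[y /andP[/eqP/val_inj <- //]]|bx].
by exists x; rewrite eqxx bx.
Qed.

Lemma glob_notin (X : vset) (b : bas X) n : n \notin X -> glob b n = false.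
Proof.
move=> nX; apply/existsP => [[y /andP[/eqP yn _]]].
by move: (ssvalP y); rewrite /= yn (negbTE nX).
Qed.

Lemma bas_ext (X : vset) (b b' : bas X) :
  (forall n, n \in X -> glob b n = glob b' n) -> b = b'.
Proof. by move=> e; apply/ffunP => x; rewrite -!glob_val e ?(ssvalP x). Qed.

Lemma glob_loc (X : vset) f n : glob (loc X f) n = (n \in X) && f n.
Proof.
case nX: (n \in X); last by rewrite glob_notin ?nX.
by rewrite -[n]/(val (SeqSub nX)) glob_val ffunE.
Qed.

Lemma glob_res X Y (b : bas X) n : glob (res Y b) n = (n \in Y) && glob b n.
Proof. exact: glob_loc. Qed.

Lemma mem_vdiff X V n : (n \in vdiff X V) = (n \in X) && (n \notin V).
Proof. by rewrite mem_filter andbC. Qed.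

Lemma glob_comb V X (v : bas V) (r : bas (vdiff X V)) n :
  glob (comb v r) n = (n \in X) && (if n \in V then glob v n else glob r n).
Proof. exact: glob_loc. Qed.

Lemma res_comb V X (v : bas V) (r : bas (vdiff X V)) :
  {subset V <= X} -> res V (comb v r) = v.
Proof.
by move=> VX; apply: bas_ext => n nV; rewrite glob_res glob_comb nV (VX _ nV).
Qed.

Lemma res_vdiff_comb V X (v : bas V) (r : bas (vdiff X V)) :
  res (vdiff X V) (comb v r) = r.
Proof.
by apply: bas_ext => n; rewrite glob_res glob_comb mem_vdiff => /andP[-> /negbTE->].
Qed.

Lemma comb_res V X (b : bas X) : comb (res V b) (res (vdiff X V) b) = b.
Proof.
apply: bas_ext => n nX; rewrite glob_comb !glob_res nX mem_vdiff nX.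
by case: (n \in V).
Qed.

Lemma comb_eq (W X : vset) (w w' : bas W) (r r' : bas (vdiff X W)) :
  {subset W <= X} -> (comb w r == comb w' r') = (w == w') && (r == r').
Proof.
move=> WX; apply/eqP/andP => [e|[/eqP -> /eqP -> //]].
split; first by rewrite -(res_comb w r WX) e res_comb.
by rewrite -(res_vdiff_comb w r) e res_vdiff_comb.
Qed.

Lemma res_res X Y Z (b : bas X) : {subset Z <= Y} -> res Z (res Y b) = res Z b.
Proof. by move=> ZY; apply: bas_ext => n nZ; rewrite !glob_res nZ (ZY _ nZ). Qed.

Lemma res_eqP X Y (b b' : bas X) :
  reflect {in Y, forall n, glob b n = glob b' n} (res Y b == res Y b').
Proof.
apply: (iffP eqP) => [e n nY|e].
  by move: (congr1 (fun c => glob c n) e); rewrite !glob_res nY.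
by apply: bas_ext => n nY; rewrite !glob_res nY e.
Qed.

Lemma res_eq_cover X (Y1 Y2 Y3 : vset) (b b' : bas X) :
  {subset Y1 <= Y3} -> {subset Y2 <= Y3} ->
  {in Y3, forall n, (n \in Y1) || (n \in Y2)} ->
  (res Y1 b == res Y1 b') && (res Y2 b == res Y2 b') = (res Y3 b == res Y3 b').
Proof.
move=> h1 h2 h3; apply/andP/res_eqP => [[/res_eqP e1 /res_eqP e2] n /h3 /orP[]|e].
- exact: e1.
- exact: e2.
by split; apply/res_eqP => n nY; apply: e; [apply: h1|apply: h2].
Qed.

Lemma res_comb_sub V W X (w : bas W) (r : bas (vdiff X W)) :
  {subset V <= W} -> {subset W <= X} -> res V (comb w r) = res V w.
Proof.
move=> VW WX; apply: bas_ext => n nV.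
by rewrite !glob_res nV glob_comb (VW _ nV) (WX _ (VW _ nV)).
Qed.

Lemma comb_assoc V W X (v : bas V) (a : bas W) (r : bas (vdiff X W)) :
  {subset V <= W} -> {subset W <= X} ->
  comb v (res (vdiff X V) (comb a r)) = comb (comb v (res (vdiff W V) a)) r.
Proof.
move=> VW WX; apply: bas_ext => n nX.
rewrite !glob_comb !glob_res glob_comb !mem_vdiff nX.
case nV: (n \in V); first by rewrite (VW _ nV).
by case nW: (n \in W); rewrite //= glob_res mem_vdiff nW nV.
Qed.

Lemma sum_bas_comb (T : nmodType) (W X : vset) (F : bas X -> T) : {subset W <= X} ->
  \sum_(b : bas X) F b = \sum_(w : bas W) \sum_(r : bas (vdiff X W)) F (comb w r).
Proof.
move=> WX; rewrite pair_big /=.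
rewrite (reindex (fun p : bas W * bas (vdiff X W) => comb p.1 p.2)) //.
exists (fun b => (res W b, res (vdiff X W) b)) => [[w r] _|b _] /=.
  by rewrite res_comb // res_vdiff_comb.
by rewrite comb_res.
Qed.

Lemma comb_pair_bij V X : {subset V <= X} ->
  bijective (fun p : bas (vdiff X V) * bas V => comb p.2 p.1).
Proof.
move=> VX; exists (fun b => (res (vdiff X V) b, res V b)) => [[r v]|b] /=.
  by rewrite res_comb // res_vdiff_comb.
by rewrite comb_res.
Qed.

Lemma res_pair_bij V X : {subset V <= X} ->
  bijective (fun b : bas X => (res (vdiff X V) b, res V b)).
Proof.
move=> VX; exists (fun p : bas (vdiff X V) * bas V => comb p.2 p.1) => [b|[r v]] /=.
  by rewrite comb_res.
by rewrite res_comb // res_vdiff_comb.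
Qed.

Section PositiveOperators.
Variable R : realType.
Local Notation C := R[i].
Implicit Types (I : finType).

Lemma conjcE (z : C) : conjc z = z^*. Proof. by []. Qed.

Lemma sum_only (T : nmodType) I (i : I) (F : I -> T) :
  (forall j, j != i -> F j = 0) -> \sum_j F j = F i.
Proof. by move=> h; rewrite (bigD1 i) //= big1 ?addr0. Qed.

Lemma sum_delta_l I (i : I) (F : I -> C) : \sum_a (a == i)%:R * F a = F i.
Proof.
rewrite (bigD1 i) //= eqxx mul1r big1 ?addr0 // => a /negbTE ->; exact: mul0r.
Qed.

Lemma sum_delta_r I (i : I) (F : I -> C) : \sum_a F a * (a == i)%:R = F i.
Proof. by rewrite -[RHS](sum_delta_l i); apply: eq_bigr => a _; rewrite mulrC. Qed.

Lemma qform_delta2 I (B : opT R I) (i j : I) (c : C) :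
  qform B (fun a => (a == i)%:R + c * (a == j)%:R) =
  B i i + c * B i j + c^* * B j i + c^* * c * B j j.
Proof.
rewrite /qform.
under eq_bigr => a _.
  under eq_bigr => b _ do rewrite mulrDr mulrA.
  rewrite big_split /= !sum_delta_r conjcE rmorphD rmorphM /= !conjC_nat.
  over.
under eq_bigr => a _ do rewrite !mulrDl -!(mulrA (c^*)).
by rewrite !big_split /= -!mulr_sumr -!mulr_suml !sum_delta_l; ring.
Qed.

Lemma conjC_of_real_form (a b : C) :
  (forall c : C, c * a + c^* * b \is Num.real) -> b = a^*.
Proof.
case: a => a1 a2; case: b => b1 b2 h.
move: (h 1) (h 'i); simpc; rewrite !complex_real => /eqP ? /eqP ?.
by congr Complex; lra.
Qed.

Lemma psd_hermitian I (B : opT R I) (i j : I) : psd B -> B j i = (B i j)^*.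
Proof.
move=> psdB; apply: conjC_of_real_form => c.
have qreal k (c' : C) : qform B (fun a => (a == k)%:R + c' * (a == j)%:R) \is Num.real.
  exact/ger0_real/psdB.
have diag_real k : B k k \is Num.real.
  by move: (qreal k 0); rewrite qform_delta2 conjC0 !mul0r !addr0.
have -> : c * B i j + c^* * B j i =
    qform B (fun a => (a == i)%:R + c * (a == j)%:R) - (B i i + c^* * c * B j j).
  by rewrite qform_delta2; ring.
apply/rpredB/rpredD/rpredM/diag_real => //.
by apply: ger0_real; rewrite mulrC mul_conjC_ge0.
Qed.

Definition mxo I (A : opT R I) : 'M[C]_#|I| :=
  \matrix_(k, l) A (enum_val k) (enum_val l).

Lemma sum_enum_val (T : nmodType) I (F : I -> T) :
  \sum_(i : I) F i = \sum_(k < #|I|) F (enum_val k).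
Proof.
rewrite (reindex (@enum_val I predT)) //.
by exists enum_rank => x _; [exact: enum_valK | exact: enum_rankK].
Qed.

Local Open Scope sesquilinear_scope.

Lemma psd_conjmx_diag_ge0 I (A : opT R I) (Q : 'M[C]_#|I|) k :
  psd A -> 0 <= (Q *m mxo A *m Q^t*) k k.
Proof.
move=> /(_ (fun i => (Q k (enum_rank i))^*)); rewrite /qform sum_enum_val.
under eq_bigr => l _ do rewrite sum_enum_val.
congr (0 <= _); rewrite mxE exchange_big /=; apply: eq_bigr => l _.
rewrite mxE mulr_suml; apply: eq_bigr => m _.
by rewrite !mxE !enum_valK conjcE conjCK.
Qed.

Lemma tr_mulop_ge0 I (A B : opT R I) : psd A -> psd B -> 0 <= tr (mulop A B).
Proof.
move=> psdA psdB.
have -> : tr (mulop A B) = \tr (mxo A *m mxo B).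
  rewrite /tr /mulop /mxtrace [LHS]sum_enum_val; apply: eq_bigr => k _.
  by rewrite [LHS]sum_enum_val !mxE; apply: eq_bigr => l _; rewrite !mxE.
(* Diagonalize [B = P^* D P]: then [tr (A B) = \sum_k (P A P^* )_kk D_kk]. *)
have hermB : (mxo B)^t* = mxo B.
  by apply/matrixP => k l; rewrite !mxE (psd_hermitian _ _ psdB) conjCK.
have normalB : mxo B \is normalmx by apply/normalmxP; rewrite hermB.
set P := spectralmx (mxo B); set d := spectral_diag (mxo B).
have unitaryP : P *m P^t* = 1%:M by apply/unitarymxP/spectral_unitarymx.
have decB : mxo B = P^t* *m diag_mx d *m P.
  by rewrite -invmx_unitary ?spectral_unitarymx //; apply/orthomx_spectralP.
have diagB : P *m mxo B *m P^t* = diag_mx d.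
  by rewrite decB !mulmxA unitaryP mul1mx -!mulmxA unitaryP mulmx1.
rewrite decB !mulmxA mxtrace_mulC !mulmxA; apply: sumr_ge0 => k _.
rewrite mul_mx_diag mxE; apply: mulr_ge0; first exact: psd_conjmx_diag_ge0.
by have := psd_conjmx_diag_ge0 P k psdB; rewrite diagB mxE eqxx mulr1n.
Qed.
End PositiveOperators.

Section OperatorAlgebra.
Variable R : realType.
Local Notation C := R[i].
Implicit Types (I : finType).

Lemma tr_mulopBl I (A B S : opT R I) :
  tr (mulop (fun a a' => A a a' - B a a') S) = tr (mulop A S) - tr (mulop B S).
Proof.
rewrite /tr /mulop -sumrB; apply: eq_bigr => i _; rewrite -sumrB.
by apply: eq_bigr => k _; rewrite mulrBl.
Qed.

Lemma tr_mulop1l I (S : opT R I) : tr (mulop (@idop R I) S) = tr S.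
Proof.
rewrite /tr /mulop /idop; apply: eq_bigr => i _.
by under eq_bigr => k _ do rewrite eq_sym; rewrite sum_delta_l.
Qed.

Lemma tr_mulop_sumr I (J : finType) (K : opT R I) (F : J -> opT R I) :
  tr (mulop K (fun b b' => \sum_j F j b b')) = \sum_j tr (mulop K (F j)).
Proof.
rewrite /tr /mulop [RHS]exchange_big; apply: eq_bigr => i _.
by rewrite [RHS]exchange_big; apply: eq_bigr => k _; rewrite mulr_sumr.
Qed.

Lemma tr_mulopZr I (K S : opT R I) (c : C) :
  tr (mulop K (fun b b' => c * S b b')) = c * tr (mulop K S).
Proof.
rewrite /tr /mulop mulr_sumr; apply: eq_bigr => i _; rewrite mulr_sumr.
by apply: eq_bigr => k _; rewrite mulrCA.
Qed.

Definition dyad I (v : I -> C) : opT R I := fun x y => v x * (v y)^*.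

Lemma qform_dyad I (A : opT R I) v : qform A v = tr (mulop A (dyad v)).
Proof.
rewrite /qform /tr /mulop /dyad; apply: eq_bigr => i _.
by apply: eq_bigr => j _; rewrite conjcE; ring.
Qed.

Lemma psd_dyad I (v : I -> C) : psd (dyad v).
Proof.
move=> u; rewrite /qform /dyad.
have -> : \sum_i \sum_j conjc (u i) * (v i * (v j)^*) * u j =
    (\sum_i (u i)^* * v i) * (\sum_i (u i)^* * v i)^*.
  rewrite mulr_suml; apply: eq_bigr => i _; rewrite rmorph_sum mulr_sumr.
  by apply: eq_bigr => j _; rewrite rmorphM /= conjCK conjcE; ring.
exact: mul_conjC_ge0.
Qed.

Lemma psd_idop I : psd (@idop R I).
Proof.
move=> v; rewrite qform_dyad tr_mulop1l.
by apply: sumr_ge0 => i _; apply: mul_conjC_ge0.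
Qed.

Lemma loew_refl I (A : opT R I) : loew A A.
Proof.
move=> v; rewrite /qform big1 // => i _; rewrite big1 // => j _.
by rewrite subrr mulr0 mul0r.
Qed.

Lemma psd_comp I (J : finType) (A : opT R I) (f : J -> I) :
  bijective f -> psd A -> psd (fun j j' => A (f j) (f j')).
Proof.
move=> [g fK gK] psdA v; have bij_g : bijective g by exists f.
rewrite /qform (reindex _ (onW_bij _ bij_g)).
under eq_bigr => i _ do rewrite (reindex _ (onW_bij _ bij_g)).
under eq_bigr => i _ do under eq_bigr => i' _ do rewrite !gK.
exact: (psdA (fun i => v (g i))).
Qed.

Definition op_compl I (K : opT R I) : opT R I := fun a a' => @idop R I a a' - K a a'.

Lemma effect_op_compl (W : vset) (K : op R W) : effect K -> effect (op_compl K).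
Proof.
move=> [psdK loewK]; split => //.
rewrite /loew /op_compl.
by under eq_fun => a do under eq_fun => a' do rewrite opprB addrC subrK.
Qed.

End OperatorAlgebra.

Section Extension.
Variable R : realType.

Definition dblock (X W : vset) (s : op R X) (r : bas (vdiff X W)) : op R W :=
  fun a a' => s (comb a r) (comb a' r).
#[global] Arguments dblock {X} W s r _ _.

Definition ptrace (X W : vset) (s : op R X) : op R W :=
  fun a a' => \sum_(r : bas (vdiff X W)) dblock W s r a a'.
#[global] Arguments ptrace {X} W s _ _.

Lemma tr_dblock (W X : vset) (s : op R X) : {subset W <= X} ->
  tr s = \sum_(r : bas (vdiff X W)) tr (dblock W s r).
Proof. by move=> WX; rewrite /tr (sum_bas_comb _ WX) exchange_big. Qed.

Lemma tr_mulop_extO (W X : vset) (M : op R W) (s : op R X) : {subset W <= X} ->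
  tr (mulop (extO (X:=X) M) s) = tr (mulop M (ptrace W s)).
Proof.
move=> WX; rewrite /tr /mulop (sum_bas_comb _ WX); apply: eq_bigr => w _.
under eq_bigr => r _ do rewrite (sum_bas_comb _ WX).
rewrite exchange_big /=; apply: eq_bigr => w' _.
rewrite /ptrace mulr_sumr; apply: eq_bigr => r _.
under eq_bigr => r' _ do rewrite /extO !res_comb // !res_vdiff_comb -mulrA.
rewrite -mulr_sumr; congr (_ * _).
by under eq_bigr => r' _ do rewrite eq_sym; rewrite sum_delta_l.
Qed.

Lemma psd_dblock (X W : vset) (s : op R X) r : {subset W <= X} ->
  psd s -> psd (dblock W s r).
Proof.
move=> WX psds v.
have := psds (fun b => v (res W b) * (res (vdiff X W) b == r)%:R).
rewrite /qform (sum_bas_comb _ WX); congr (0 <= _); apply: eq_bigr => w _.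
rewrite (sum_only (i:=r)) => [|r0 nr]; last first.
  by rewrite big1 // => b _; rewrite res_vdiff_comb (negbTE nr) mulr0 conjc0 !mul0r.
rewrite (sum_bas_comb _ WX); apply: eq_bigr => w' _.
rewrite (sum_only (i:=r)) => [|r0 nr]; last first.
  by rewrite !res_vdiff_comb (negbTE nr) !mulr0.
by rewrite !res_comb // !res_vdiff_comb eqxx !mulr1 conjcE.
Qed.

Lemma psd_extO (W X : vset) (K : op R W) : {subset W <= X} ->
  psd K -> psd (extO (X:=X) K).
Proof.
move=> WX psdK v.
have -> : qform (extO (X:=X) K) v =
    \sum_(r : bas (vdiff X W)) qform K (fun w => v (comb w r)).
  rewrite /qform (sum_bas_comb _ WX) exchange_big /=; apply: eq_bigr => r _.
  apply: eq_bigr => w _; rewrite (sum_bas_comb _ WX); apply: eq_bigr => w' _.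
  rewrite (sum_only (i:=r)) => [|r0 nr]; last first.
    by rewrite /extO !res_vdiff_comb eq_sym (negbTE nr) mulr0 mulr0 mul0r.
  by rewrite /extO !res_comb // !res_vdiff_comb eqxx mulr1.
by apply: sumr_ge0 => r _; apply: psdK.
Qed.

Lemma extO_idop (W X : vset) : {subset W <= X} ->
  extO (X:=X) (@idop R (bas W)) = @idop R _.
Proof.
move=> WX; apply/funext => b; apply/funext => b'; rewrite /extO /idop.
rewrite -(comb_res W b) -(comb_res W b') !res_comb // !res_vdiff_comb comb_eq //.
by case: (_ == _); case: (_ == _); rewrite ?mulr1 ?mulr0.
Qed.

Lemma extO_extO (W W' X : vset) (K : op R W) : {subset W <= W'} ->
  {subset W' <= X} -> extO (X:=X) (extO (X:=W') K) = extO (X:=X) K.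
Proof.
move=> WW' W'X; apply/funext => b; apply/funext => b'; rewrite /extO.
have sub_W' : {subset vdiff W' W <= W'} by move=> n; rewrite mem_vdiff => /andP[].
rewrite !res_res // -mulrA -natrM mulnb (res_eq_cover (Y3 := vdiff X W)) //.
- by move=> n; rewrite !mem_vdiff => /andP[/W'X -> ->].
- by move=> n; rewrite !mem_vdiff => /andP[-> ]; apply: contra => /WW'.
by move=> n; rewrite !mem_vdiff => /andP[-> ->] /=; case: (n \in W').
Qed.

Lemma extOB (W X : vset) (A B : op R W) :
  extO (X:=X) (fun a a' => A a a' - B a a') =
  (fun b b' => extO (X:=X) A b b' - extO (X:=X) B b b').
Proof. by apply/funext => b; apply/funext => b'; rewrite /extO mulrBl. Qed.

End Extension.

Section SuperOperators.
Variable R : realType.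
Local Notation C := R[i].
Variables (V : vset) (E : sop R V).

Lemma sop_ext (A B : op R V) i j : (forall k l, A k l = B k l) -> E A i j = E B i j.
Proof. by move=> AB; congr E; apply/funext => k; apply/funext => l. Qed.

Section Linear.
Hypothesis linE : sop_linear E.

Lemma sop_lin0 i j : E (fun _ _ => 0) i j = 0.
Proof.
have := linE 1 (fun _ _ => 0) (fun _ _ => 0) i j.
rewrite (@sop_ext _ (fun _ _ => 0)) => [|k l]; last by rewrite mulr0 addr0.
by rewrite mul1r -{1}[E _ i j]addr0 => /addrI.
Qed.

Lemma sop_linD (A B : op R V) i j :
  E (fun k l => A k l + B k l) i j = E A i j + E B i j.
Proof. by rewrite -[E A i j]mul1r -linE; apply: sop_ext => k l; rewrite mul1r. Qed.

Lemma sop_linZ (a : C) (A : op R V) i j :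
  E (fun k l => a * A k l) i j = a * E A i j.
Proof.
by rewrite -[RHS]addr0 -(sop_lin0 i j) -linE; apply: sop_ext => k l; rewrite addr0.
Qed.

Lemma sop_lin_sum (T : finType) (f : T -> op R V) i j :
  E (fun k l => \sum_(r : T) f r k l) i j = \sum_(r : T) E (f r) i j.
Proof.
elim: (index_enum T) => [|x s IH].
  by rewrite big_nil -[RHS](sop_lin0 i j); apply: sop_ext => k l; rewrite big_nil.
by rewrite big_cons -IH -sop_linD; apply: sop_ext => k l; rewrite big_cons.
Qed.

Lemma ptrace_extS (W X : vset) (rho : op R X) :
  {subset V <= W} -> {subset W <= X} ->
  ptrace W (extS E rho) = extS E (ptrace W rho).
Proof.
move=> VW WX; apply/funext => a; apply/funext => a'; rewrite /ptrace /dblock /extS.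
under eq_bigr => r _ do rewrite !(res_comb_sub _ _ VW WX).
rewrite -sop_lin_sum; apply: sop_ext => k l; apply: eq_bigr => r _.
by rewrite !comb_assoc.
Qed.

Definition delta_op (I : finType) (x y : I) : opT R I :=
  fun c c' => (c == x)%:R * (c' == y)%:R.

Lemma op_delta_decomp (I : finType) (t : opT R I) c c' :
  t c c' = \sum_x \sum_y t x y * delta_op x y c c'.
Proof.
rewrite (sum_only (i:=c)) => [|x nx]; last first.
  by apply: big1 => y _; rewrite /delta_op eq_sym (negbTE nx) mul0r mulr0.
rewrite (sum_only (i:=c')) => [|y ny]; last first.
  by rewrite /delta_op [c' == y]eq_sym (negbTE ny) !mulr0.
by rewrite /delta_op !eqxx !mulr1.
Qed.

Lemma extS_delta_decomp (W : vset) (t : op R W) b b' :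
  extS E t b b' = \sum_x \sum_y t x y * extS E (delta_op x y) b b'.
Proof.
rewrite /extS (sop_ext _ _ (fun k l => op_delta_decomp t _ _)).
rewrite sop_lin_sum; apply: eq_bigr => x _; rewrite sop_lin_sum.
by apply: eq_bigr => y _; rewrite sop_linZ.
Qed.

Definition sop_dual (W : vset) (K : op R W) : op R W :=
  fun a a' => tr (mulop K (extS E (delta_op a' a))).

Lemma tr_mulop_dual (W : vset) (K t : op R W) :
  tr (mulop (sop_dual K) t) = tr (mulop K (extS E t)).
Proof.
have -> : extS E t = fun b b' => \sum_x \sum_y t x y * extS E (delta_op x y) b b'.
  by apply/funext => b; apply/funext => b'; rewrite extS_delta_decomp.
rewrite tr_mulop_sumr.
under eq_bigr => x _ do rewrite tr_mulop_sumr.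
under eq_bigr => x _ do under eq_bigr => y _ do rewrite tr_mulopZr.
rewrite [LHS]exchange_big; apply: eq_bigr => x _; apply: eq_bigr => y _.
by rewrite mulrC.
Qed.

Lemma tr_extO_dual (W X : vset) (K : op R W) (rho : op R X) :
  {subset V <= W} -> {subset W <= X} ->
  tr (mulop (extO (X:=X) (sop_dual K)) rho) = tr (mulop (extO (X:=X) K) (extS E rho)).
Proof. by move=> VW WX; rewrite !tr_mulop_extO // tr_mulop_dual ptrace_extS. Qed.

End Linear.

Section CompletelyPositive.
Hypothesis cpE : sop_CP E.

Lemma psd_extS (X : vset) (rho : op R X) : {subset V <= X} ->
  psd rho -> psd (extS E rho).
Proof.
move=> VX psd_rho.
(* Up to the bijection [bas X = bas (X \ V) * bas V], [extS E rho] is [ampl E rho]. *)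
exact: (psd_comp (res_pair_bij VX) (cpE (psd_comp (comb_pair_bij VX) psd_rho))).
Qed.

End CompletelyPositive.

Section TraceNonIncreasing.
Hypothesis tniE : sop_TNI E.

Lemma tr_extS_le (X : vset) (rho : op R X) : {subset V <= X} ->
  psd rho -> tr (extS E rho) <= tr rho.
Proof.
move=> VX psd_rho; rewrite (tr_dblock rho VX) (tr_dblock (extS E rho) VX).
apply: ler_sum => r _; rewrite /tr /dblock /extS.
under eq_bigr => w _ do rewrite res_comb // res_vdiff_comb.
exact/tniE/psd_dblock.
Qed.

End TraceNonIncreasing.

Section DualEffect.
Hypotheses (linE : sop_linear E) (cpE : sop_CP E) (tniE : sop_TNI E).

Lemma psd_dual (W : vset) (K : op R W) : {subset V <= W} ->
  psd K -> psd (sop_dual K).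
Proof.
move=> VW psdK v; rewrite qform_dyad tr_mulop_dual //.
by apply: tr_mulop_ge0 psdK _; apply/psd_extS/psd_dyad.
Qed.

Lemma loew_dual_idop (W : vset) (K : op R W) : {subset V <= W} ->
  loew K (@idop R _) -> loew (sop_dual K) (@idop R _).
Proof.
move=> VW loewK v; rewrite qform_dyad tr_mulopBl tr_mulop1l tr_mulop_dual //.
have psdEv : psd (extS E (dyad v)) by apply/psd_extS/psd_dyad.
have trK := tr_mulop_ge0 loewK psdEv; rewrite tr_mulopBl tr_mulop1l in trK.
have trE := tr_extS_le tniE VW (psd_dyad v).
by rewrite -[tr (dyad v)](subrK (tr (extS E (dyad v)))) -addrA addr_ge0 // subr_ge0.
Qed.

Lemma effect_dual (W : vset) (K : op R W) : {subset V <= W} ->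
  effect K -> effect (sop_dual K).
Proof. by move=> VW [psdK loewK]; split; [apply: psd_dual | apply: loew_dual_idop]. Qed.

End DualEffect.
End SuperOperators.

Section Expectation.
Variable R : realType.

Lemma ReB (z w : R[i]) : complex.Re (z - w) = complex.Re z - complex.Re w.
Proof. by case: z; case: w. Qed.

Lemma Re_ge0 (z : R[i]) : 0 <= z -> 0 <= complex.Re z.
Proof. by rewrite lecE => /andP[]. Qed.

Lemma expv_idop (W X : vset) (s : op R X) : {subset W <= X} ->
  expv (@idop R (bas W)) s = complex.Re (tr s).
Proof. by move=> WX; rewrite /expv extO_idop // tr_mulop1l. Qed.

Lemma expv_op_compl (W X : vset) (K : op R W) (s : op R X) : {subset W <= X} ->
  expv (op_compl K) s = complex.Re (tr s) - expv K s.
Proof.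
by move=> WX; rewrite /expv /op_compl extOB tr_mulopBl extO_idop // tr_mulop1l ReB.
Qed.

Lemma expv_extO (W W' X : vset) (N : op R W) (s : op R X) :
  {subset W <= W'} -> {subset W' <= X} -> expv (extO (X:=W') N) s = expv N s.
Proof. by move=> WW' W'X; rewrite /expv extO_extO. Qed.

Lemma expv_ge0 (W X : vset) (N : op R W) (s : op R X) : {subset W <= X} ->
  psd N -> psd s -> 0 <= expv N s.
Proof. by move=> WX psdN psds; apply/Re_ge0/tr_mulop_ge0/psds/psd_extO. Qed.

Lemma effect_idop (W : vset) : effect (@idop R (bas W)).
Proof. by split; [apply: psd_idop | apply: loew_refl]. Qed.

Lemma effect_extO (W X : vset) (N : op R W) : {subset W <= X} ->
  effect N -> effect (extO (X:=X) N).
Proof.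
move=> WX [psdN loewN]; split; first exact: psd_extO.
by have := psd_extO WX loewN; rewrite extOB extO_idop.
Qed.

Lemma expdem_set1 (W X : vset) (s : op R X) (M : op R W) : expdem s [set M] = expv M s.
Proof.
rewrite /expdem; destruct pselect as [M0|M_neq0]; last by rewrite image_set1 inf1.
by exfalso; have : [set M] M by []; rewrite M0.
Qed.

Lemma expdem_le_shift (W X : vset) (s t : op R X) (Psi : set (op R W)) (c : R) :
  {subset W <= X} -> Psi `<=` @effect R W -> psd s ->
  (Psi = set0 -> complex.Re (tr s) + c <= complex.Re (tr t)) ->
  (forall N, Psi N -> expv N s + c <= expv N t) ->
  expdem s Psi + c <= expdem t Psi.
Proof.
move=> WX effPsi psds le_tr le_expv; rewrite /expdem.
destruct pselect as [Psi0|Psi_neq0]; first exact: le_tr.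
have [N0 PsiN0] : exists N, Psi N by apply/set0P/eqP.
apply: lb_le_inf => [|_ [N PsiN <-]]; first by exists (expv N0 t), N0.
apply: le_trans (le_expv _ PsiN); rewrite lerD2r; apply: ge_inf; last by exists N.
by exists 0 => _ [N' PsiN' <-]; apply: expv_ge0 => //; case: (effPsi _ PsiN').
Qed.

End Expectation.

Section Refinement.
Variables (R : realType) (V : vset).
Implicit Types (E F : sop R V).

Definition wlp E (W : vset) (K : op R W) : op R W := op_compl (sop_dual E (op_compl K)).

Lemma expv_dual E (W X : vset) (K : op R W) (rho : op R X) :
  sop_linear E -> {subset V <= W} -> {subset W <= X} ->
  expv (sop_dual E K) rho = expv K (extS E rho).
Proof. by move=> linE VW WX; rewrite /expv tr_extO_dual. Qed.

Lemma expv_wlp E (W X : vset) (K : op R W) (rho : op R X) :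
  sop_linear E -> {subset V <= W} -> {subset W <= X} ->
  expv (wlp E K) rho
  = expv K (extS E rho) + complex.Re (tr rho) - complex.Re (tr (extS E rho)).
Proof.
move=> linE VW WX; rewrite /wlp expv_op_compl // expv_dual // expv_op_compl //.
lra.
Qed.

Lemma effect_wlp E (W : vset) (K : op R W) : DProg E -> {subset V <= W} ->
  effect K -> effect (wlp E K).
Proof.
move=> [linE cpE tniE] VW.
by move/effect_op_compl/(effect_dual linE cpE tniE VW)/effect_op_compl.
Qed.

Lemma le_T_e_of_le_T_s E F : le_T_s [set E] [set F] -> le_T_e E F.
Proof.
move=> leEF W M N effM effN satE.
have satF : sat_tot_s [set F] [set M] [set N].
  apply: leEF; [by move=> _ -> | by move=> _ -> |].
  by move=> X VWX rho rho_dens _ ->; rewrite !expdem_set1; apply: satE.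
move=> X VWX rho rho_dens.
by have := satF X VWX rho rho_dens F erefl; rewrite !expdem_set1.
Qed.

Lemma le_P_e_of_le_P_s E F : le_P_s [set E] [set F] -> le_P_e E F.
Proof.
move=> leEF W M N effM effN satE.
have satF : sat_par_s [set F] [set M] [set N].
  apply: leEF; [by move=> _ -> | by move=> _ -> |].
  by move=> X VWX rho rho_dens _ ->; rewrite !expdem_set1; apply: satE.
move=> X VWX rho rho_dens.
by have := satF X VWX rho rho_dens F erefl; rewrite !expdem_set1.
Qed.

Lemma le_T_e_expv_le E F (W X : vset) (N : op R W) (rho : op R X) :
  DProg E -> le_T_e E F -> effect N -> {subset V ++ W <= X} -> pdensity rho ->
  expv N (extS E rho) <= expv N (extS F rho).
Proof.
move=> [linE cpE tniE] leEF effN VWX rho_dens.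
have [VU WU] := subset_cat2 V W.
pose N' := extO (X:=V ++ W) N.
have effN' : effect N' by apply: effect_extO WU effN.
have satE : sat_tot_e E (sop_dual E N') N'.
  by move=> X' VUX' rho' _; rewrite expv_dual //; exact: (cat_subset VUX').2.
have effM := effect_dual linE cpE tniE VU effN'.
have := leEF _ _ _ effM effN' satE X (cat_subset_catA VWX) rho rho_dens.
by rewrite expv_dual // !(expv_extO _ _ WU).
Qed.

Lemma le_P_e_expv_le E F (W X : vset) (N : op R W) (rho : op R X) :
  DProg E -> le_P_e E F -> effect N -> {subset V ++ W <= X} -> pdensity rho ->
  expv N (extS E rho) - complex.Re (tr (extS E rho))
  <= expv N (extS F rho) - complex.Re (tr (extS F rho)).
Proof.
move=> progE leEF effN VWX rho_dens; have [linE _ _] := progE.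
have [VU WU] := subset_cat2 V W.
pose N' := extO (X:=V ++ W) N.
have effN' : effect N' by apply: effect_extO WU effN.
have satE : sat_par_e E (wlp E N') N'.
  by move=> X' VUX' rho' _; rewrite expv_wlp //; exact: (cat_subset VUX').2.
have effM := effect_wlp progE VU effN'.
have := leEF _ _ _ effM effN' satE X (cat_subset_catA VWX) rho rho_dens.
rewrite expv_wlp // !(expv_extO _ _ WU) //; lra.
Qed.

Lemma le_T_s_of_le_T_e E F : DProg E -> le_T_e E F -> le_T_s [set E] [set F].
Proof.
move=> progE leEF W Theta Psi _ effPsi satE X VWX rho rho_dens _ ->.
apply: le_trans (satE X VWX rho rho_dens E erefl) _.
have [[_ cpE _] [VX WX]] := (progE, cat_subset VWX).
rewrite -[expdem (extS E rho) Psi]addr0; apply: expdem_le_shift => //.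
- by apply: psd_extS; case: rho_dens.
- move=> _; rewrite addr0 -!(expv_idop _ WX).
  exact: le_T_e_expv_le (effect_idop R W) _ _.
- by move=> N PsiN; rewrite addr0; apply: le_T_e_expv_le (effPsi _ PsiN) _ _.
Qed.

Lemma le_P_s_of_le_P_e E F : DProg E -> le_P_e E F -> le_P_s [set E] [set F].
Proof.
move=> progE leEF W Theta Psi _ effPsi satE X VWX rho rho_dens _ ->.
apply: le_trans (satE X VWX rho rho_dens E erefl) _.
have [[_ cpE _] [VX WX]] := (progE, cat_subset VWX).
set trE := complex.Re (tr (extS E rho)); set trF := complex.Re (tr (extS F rho)).
suff : expdem (extS E rho) Psi + (trF - trE) <= expdem (extS F rho) Psi by lra.
apply: expdem_le_shift => //.
- by apply: psd_extS; case: rho_dens.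
- by move=> _; lra.
- by move=> N PsiN; have := le_P_e_expv_le progE leEF (effPsi _ PsiN) VWX rho_dens; lra.
Qed.

End Refinement.

Theorem corollary5p2 (R : realType) (V : vset) (E F : sop R V) :
  DProg E -> DProg F ->
  (le_T_s [set E]%classic [set F]%classic <-> le_T_e E F) /\
  (le_P_s [set E]%classic [set F]%classic <-> le_P_e E F).
Proof.
(* Only [E] has to be a program: its dual provides the preconditions. *)
move=> progE _; split; split.
- exact: le_T_e_of_le_T_s.
- exact: le_T_s_of_le_T_e.
- exact: le_P_e_of_le_P_s.
- exact: le_P_s_of_le_P_e.
Qed.
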